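(* Let $N\ge 2$, $C\ge 0$, $k\ge 1$ and $L\ge 1$ be integers with $C<\frac{N-1}{2}$, $k\le N-1$, and $$\binom{N-1-C}{k}\ \ge\ \frac{1}{2}\binom{N-1}{k}.$$ Let $\mathcal{A}\subseteq\mathbb{R}^L$, $\mathcal{O}$, $\mathcal{M}$ be action, observation and message spaces, and $\hat{\pi}:\mathcal{O}\times\mathcal{M}^k\to\mathcal{A}$ any function. Fix $o\in\mathcal{O}$ and $\mathbf{m}_{\mathrm{benign}},\mathbf{m}_{\mathrm{adv}}\in\mathcal{M}^{N-1}$ differing in at most $C$ coordinates, and let $$\mathcal{A}_{\mathrm{benign}}:=\bigcup_{T\in\mathcal{H}(N-1,k)}\{\hat{\pi}(o,\mathsf{Ablate}(\mathbf{m}_{\mathrm{benign}},T))\}.$$ Let $0<D\le\binom{N-1}{k}$ and let $T_1,\dots,T_D$ be $D$ distinct elements of $\mathcal{H}(N-1,k)$ chosen uniformly at random without replacement. Define $$\widetilde{\pi}_D(o,\mathbf{m}_{\mathrm{adv}}):=\mathsf{Median}\{\hat{\pi}(o,\mathsf{Ablate}(\mathbf{m}_{\mathrm{adv}},T_d))\}_{d=1}^D$$ (coordinate-wise median). Then, with probability at least $$p_D=\frac{\sum_{j=\tilde{D}}^{D}\binom{n_2}{j}\binom{n_1-n_2}{D-j}}{\binom{n_1}{D}},\qquad n_1=\binom{N-1}{k},\ n_2=\binom{N-C-1}{k},\ \tilde{D}=\lfloor D/2\rfloor+1,$$ it holds that $$\widetilde{\pi}_D(o,\mathbf{m}_{\mathrm{adv}})\in\mathsf{Range}(\mathcal{A}_{\mathrm{benign}}):=\{a\in\mathbb{R}^L:\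 \forall\,1\le l\le L,\ \exists\,\underline{a},\overline{a}\in\mathcal{A}_{\mathrm{benign}}\text{ with }\underline{a}_l\le a_l\le\overline{a}_l\}.$$
   Context: For a list $\mathbf{m}=[m_1,\dots,m_n]$ and $T=\{j_1<\dots<j_k\}\subseteq[n]$, $\mathsf{Ablate}(\mathbf{m},T):=[m_{j_1},\dots,m_{j_k}]$. $\mathcal{H}(n,k)$ is the set of all $k$-element subsets of $\{1,\dots,n\}$. $\mathsf{Median}$ of a list of vectors in $\mathbb{R}^L$ is the coordinate-wise median. Setting: an agent receives $N-1$ messages, of which an adversary may corrupt up to $C$, so the received list $\mathbf{m}_{\mathrm{adv}}$ differs from the uncorrupted list $\mathbf{m}_{\mathrm{benign}}$ in at most $C$ positions. Binomial coefficients $\binom{a}{b}$ with $b>a$ or $b<0$ are $0$. *)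

From mathcomp Require Import all_boot all_order all_algebra.
Set Implicit Arguments. Unset Strict Implicit. Unset Printing Implicit Defensive.
Import Order.TTheory GRing.Theory Num.Theory.
Local Open Scope ring_scope.

(* Messages are indexed by 'I_n = {0,...,n-1} (0-based version of [n]). *)

(* Ablate(m, T): the messages m_j, j in T, listed in increasing order of j
   (enum of a set of ordinals lists its elements in increasing order). *)
Definition ablate (M : Type) (n : nat) (m : 'I_n -> M) (T : {set 'I_n}) : seq M :=
  [seq m j | j <- enum T].

Definition Hset (n k : nat) : {set {set 'I_n}} := [set T : {set 'I_n} | #|T| == k].

Definition median (R : realFieldType) (s : seq R) : R :=
  let t := sort <=%R s in
  let n := size t in
  if odd n then nth 0 t n./2
  else (nth 0 t n./2.-1 + nth 0 t n./2) / 2%:R.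

Definition vmedian (R : realFieldType) (L : nat) (vs : seq 'rV[R]_L) : 'rV[R]_L :=
  \row_(l < L) median [seq (v : 'rV[R]_L) 0 l | v <- vs].

Definition inRange (R : realFieldType) (L : nat) (A : seq 'rV[R]_L) (a : 'rV[R]_L) : bool :=
  [forall l : 'I_L, has (fun lo : 'rV[R]_L => lo 0 l <= a 0 l) A
                    && has (fun hi : 'rV[R]_L => a 0 l <= hi 0 l) A].

Definition Abenign (R : realFieldType) (L : nat) (O M : Type)
  (pihat : O -> seq M -> 'rV[R]_L) (o : O) (n k : nat) (mb : 'I_n -> M) : seq 'rV[R]_L :=
  [seq pihat o (ablate mb T) | T <- enum (Hset n k)].

(* An ordered draw (T_1,...,T_D) of D distinct elements of H(n,k). *)
Definition valid_draw (n k D : nat) (f : {ffun 'I_D -> {set 'I_n}}) : bool :=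
  injectiveb f && [forall d, f d \in Hset n k].

Definition pi_tilde (R : realFieldType) (L : nat) (O M : Type)
  (pihat : O -> seq M -> 'rV[R]_L) (o : O) (n D : nat) (ma : 'I_n -> M)
  (f : {ffun 'I_D -> {set 'I_n}}) : 'rV[R]_L :=
  vmedian [seq pihat o (ablate ma (f d)) | d <- enum 'I_D].

Definition pD (R : realFieldType) (n1 n2 D : nat) : R :=
  (\sum_(D./2.+1 <= j < D.+1) ('C(n2, j) * 'C(n1 - n2, D - j))%N)%:R / ('C(n1, D))%:R.

(* If more than half of the D sampled index sets avoid the (at most C) corrupted
   positions, the predictions made on them are benign.  At most half of a list lies
   strictly above its median and at most half strictly below it, so in every
   coordinate some benign prediction lies at or below the median and some at or
   above it: the median policy then lands in Range(A_benign).
   To count such draws, fix a family G of exactly 'C(N-C-1, k) sets avoiding the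
   corrupted positions.  An injective draw is a D-subset of H(N-1, k) together with
   one of its D! orderings, so the draws meeting G in more than D/2 sets number
   D! * sum_j 'C(|G|, j) 'C(n1 - |G|, D - j), against D! * 'C(n1, D) draws in all;
   the quotient is p_D. *)

From mathcomp Require Import all_boot all_order all_algebra.
From mathcomp Require Import zify.
Import Order.TTheory GRing.Theory Num.Theory.
Set Implicit Arguments. Unset Strict Implicit. Unset Printing Implicit Defensive.
Local Open Scope ring_scope.

Lemma count_enum_card (T : finType) (P : pred T) : count P (enum T) = #|P|.
Proof. by rewrite cardE -size_filter enumT /enum_mem; congr size; apply: eq_filter. Qed.

Section SortedCount.
Variables (disp : Order.disp_t) (T : porderType disp) (x0 : T).
Variables (t : seq T) (i : nat).
Hypotheses (t_sorted : sorted <=%O t) (lt_i_t : (i < size t)%N).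

Lemma sorted_take_le_nth : all (fun x => x <= nth x0 t i)%O (take i.+1 t).
Proof.
apply/(all_nthP x0) => j; rewrite size_takel // => lt_j; rewrite nth_take //.
by apply: le_sorted_leq_nth; rewrite ?inE // (leq_trans lt_j).
Qed.

Lemma sorted_drop_ge_nth : all (fun x => nth x0 t i <= x)%O (drop i t).
Proof.
apply/(all_nthP x0) => j; rewrite size_drop => lt_j; rewrite nth_drop.
by apply: le_sorted_leq_nth; rewrite ?inE ?leq_addr // -ltn_subRL.
Qed.

Lemma count_gt_nth_sorted : (count (fun x => nth x0 t i < x)%O t <= size t - i.+1)%N.
Proof.
rewrite -[t in count _ t](cat_take_drop i.+1) count_cat.
rewrite (eq_in_count (a2 := pred0)) ?count_pred0; last first.
  by move=> x /(allP sorted_take_le_nth) /le_gtF.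
by rewrite (leq_trans (count_size _ _)) // size_drop.
Qed.

Lemma count_lt_nth_sorted : (count (fun x => x < nth x0 t i)%O t <= i)%N.
Proof.
rewrite -[t in count _ t](cat_take_drop i) count_cat.
rewrite [count _ (drop _ _)](eq_in_count (a2 := pred0)) ?count_pred0; last first.
  by move=> x /(allP sorted_drop_ge_nth) /le_gtF.
by rewrite addn0 (leq_trans (count_size _ _)) // size_take_min geq_minl.
Qed.

End SortedCount.

Section Median.
Variable R : realFieldType.
Implicit Types s : seq R.

Lemma count_gt_median s : (count (fun x => median s < x)%R s <= (size s)./2)%N.
Proof.
rewrite /median -(size_sort <=%R s) -(permP (permEl (perm_sort <=%R s))).
set t := sort _ s; have t_sorted : sorted <=%R t := sort_le_sorted s.
have size_t := odd_double_half (size t).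
case: (posnP (size t)) => [/size0nil -> // | t_gt0].
have lt_h_t : ((size t)./2 < size t)%N by move: size_t; case: odd => /=; lia.
case: ifP => odd_t.
  apply: leq_trans (count_gt_nth_sorted 0 t_sorted lt_h_t) _.
  by move: size_t; rewrite odd_t /=; lia.
have lt_h1_t := leq_ltn_trans (leq_pred _) lt_h_t.
have le_nth : nth 0 t (size t)./2.-1 <= nth 0 t (size t)./2.
  by apply: le_sorted_leq_nth; rewrite ?inE ?leq_pred.
apply: leq_trans (sub_count _ _) (leq_trans (count_gt_nth_sorted 0 t_sorted lt_h1_t) _).
  by move=> x; apply: le_lt_trans (midf_le le_nth).1.
by move: size_t; rewrite odd_t /=; lia.
Qed.

Lemma count_lt_median s : (count (fun x => x < median s)%R s <= (size s)./2)%N.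
Proof.
rewrite /median -(size_sort <=%R s) -(permP (permEl (perm_sort <=%R s))).
set t := sort _ s; have t_sorted : sorted <=%R t := sort_le_sorted s.
have size_t := odd_double_half (size t).
case: (posnP (size t)) => [/size0nil -> // | t_gt0].
have lt_h_t : ((size t)./2 < size t)%N by move: size_t; case: odd => /=; lia.
case: ifP => odd_t; first exact: count_lt_nth_sorted.
have lt_h1_t := leq_ltn_trans (leq_pred _) lt_h_t.
have le_nth : nth 0 t (size t)./2.-1 <= nth 0 t (size t)./2.
  by apply: le_sorted_leq_nth; rewrite ?inE ?leq_pred.
apply: leq_trans (sub_count _ _) (count_lt_nth_sorted 0 t_sorted lt_h_t).
by move=> x /lt_le_trans; apply; exact: (midf_le le_nth).2.
Qed.

End Median.

Section Majority.
Variables (R : realFieldType) (I : eqType) (P : pred I).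

Lemma exists_le_of_count_lt (g : I -> R) (m : R) (s : seq I) :
  (count (fun i => m < g i)%R s < count P s)%N -> exists2 i, P i & g i <= m.
Proof.
move=> lt_count; have [/hasP[i _ /andP[Pi le_gi]] | /hasPn none] :=
  boolP (has (fun i => P i && (g i <= m)) s); first by exists i.
suff : (count P s <= count (fun i => m < g i)%R s)%N by rewrite leqNgt lt_count.
rewrite (eq_in_count (a2 := fun i => P i && (m < g i)%R)); last first.
  by move=> i /none; case: (P i) => //=; rewrite ltNge => /negbTE ->.
by apply: sub_count => i /andP[].
Qed.

Lemma median_majority (g : I -> R) (s : seq I) : ((size s)./2 < count P s)%N ->
  (exists2 i, P i & g i <= median (map g s)) /\
  (exists2 i, P i & median (map g s) <= g i).
Proof.
move=> majority; split.
  apply: exists_le_of_count_lt; apply: leq_ltn_trans majority.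
  by have := count_gt_median (map g s); rewrite count_map size_map.
have [i Pi] : exists2 i, P i & - g i <= - median (map g s).
  apply: exists_le_of_count_lt; apply: leq_ltn_trans majority.
  have := count_lt_median (map g s); rewrite count_map size_map.
  by move=> count_lt; under eq_count do rewrite ltrN2.
by rewrite lerN2; exists i.
Qed.

End Majority.

Section InjectiveDraws.
Local Open Scope nat_scope.
Variables (X : finType) (D : nat).

Lemma card_inj_ffuns_with_image (Y : {set X}) : #|Y| = D ->
  #|[set f : {ffun 'I_D -> X} | injectiveb f & f @: 'I_D == Y]| = D`!.
Proof.
move=> card_Y; transitivity #|[set f : {ffun 'I_D -> X} in ffun_on Y | injectiveb f]|.
  apply: eq_card => f; rewrite !inE andbC; apply: andb_id2r => /injectiveP inj_f.
  apply/eqP/forallP => [<- d | f_Y]; first exact: imset_f.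
  apply/eqP; rewrite eqEcard card_imset // card_ord card_Y leqnn andbT.
  by apply/subsetP => _ /imsetP[d _ ->].
by rewrite card_inj_ffuns_on card_ord card_Y ffactnn.
Qed.

Lemma card_inj_ffuns_image (P : pred {set X}) :
  #|[set f : {ffun 'I_D -> X} | injectiveb f & P (f @: 'I_D)]| =
  D`! * #|[set Y : {set X} | P Y & #|Y| == D]|.
Proof.
rewrite -!sum1dep_card (partition_big (fun f : {ffun 'I_D -> X} => f @: 'I_D)
  [pred Y : {set X} | P Y & #|Y| == D]) /=.
  rewrite big_distrr /=; apply: eq_bigr => Y /andP[P_Y /eqP card_Y].
  rewrite muln1 -(card_inj_ffuns_with_image card_Y) sum1dep_card.
  apply: eq_card => f; rewrite !inE -andbA; apply: andb_id2l => _.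
  by rewrite andbC; case: eqP => // ->.
by move=> f /andP[/injectiveP inj_f ->]; rewrite card_imset // card_ord eqxx.
Qed.

End InjectiveDraws.

Section SubsetsMeeting.
Local Open Scope nat_scope.
Variables (X : finType) (G H : {set X}).
Hypothesis sGH : G \subset H.

Lemma setID_setU (A B : {set X}) : A \subset G -> [disjoint B & G] ->
  (A :|: B) :&: G = A /\ (A :|: B) :\: G = B.
Proof.
move=> sAG dBG; have /eqP AG0 : A :\: G == set0 by rewrite setD_eq0.
split; first by rewrite setIUl (setIidPl sAG) (disjoint_setI0 dBG) setU0.
by rewrite setDUl AG0 set0U (setDidPl dBG).
Qed.

Lemma card_subsets_meeting_eq (D j : nat) : j <= D ->
  #|[set Y : {set X} | (Y \subset H) && (#|Y :&: G| == j) & #|Y| == D]| =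
  'C(#|G|, j) * 'C(#|H :\: G|, D - j).
Proof.
move=> le_jD.
have splitK : cancel (fun Y => (Y :&: G, Y :\: G)) (fun AB => AB.1 :|: AB.2).
  by move=> Y; rewrite /= setID.
rewrite -!cards_draws -cardsX -(card_imset _ (can_inj splitK)).
apply: eq_card => -[A B]; rewrite !inE /=; apply/imsetP/andP => [[Y] | []].
  rewrite inE => /andP[/andP[sYH /eqP card_YG] /eqP card_Y] [-> ->].
  by rewrite subsetIr setSD // card_YG -card_Y -(cardsID G Y) card_YG addKn !eqxx.
move=> /andP[sAG /eqP card_A]; rewrite subsetD => /andP[/andP[sBH dBG] /eqP card_B].
have [YG_A YG_B] := setID_setU sAG dBG.
exists (A :|: B); last by rewrite YG_A YG_B.
by rewrite inE -(cardsID G (A :|: B)) YG_A YG_B card_A card_B subnKC // subUset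
  (subset_trans sAG sGH) sBH !eqxx.
Qed.

Lemma card_subsets_meeting_ge (D t : nat) :
  #|[set Y : {set X} | (Y \subset H) && (t <= #|Y :&: G|) & #|Y| == D]| =
  \sum_(t <= j < D.+1) 'C(#|G|, j) * 'C(#|H :\: G|, D - j).
Proof.
have le_YG_Y (Y : {set X}) : #|Y :&: G| < #|Y|.+1.
  by rewrite ltnS subset_leq_card ?subsetIl.
rewrite big_geq_mkord -sum1dep_card (partition_big (fun Y => inord #|Y :&: G| : 'I_D.+1)
  (fun j : 'I_D.+1 => t <= j)) /=; last first.
  by move=> Y /andP[/andP[_ le_t_YG] /eqP <-]; rewrite inordK.
apply: eq_big => // j le_tj.
rewrite sum1dep_card -card_subsets_meeting_eq; last exact: ltn_ord j.
apply: eq_card => Y; rewrite !inE; case: (eqVneq #|Y| D) => [card_Y | _]; last first.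
  by rewrite !andbF.
rewrite !andbT -(inj_eq val_inj) /= inordK -?card_Y // -andbA; apply: andb_id2l => _.
by case: eqP => [->|]; rewrite ?le_tj ?andbF.
Qed.

Lemma card_inj_ffuns_meeting (D t : nat) :
  #|[set f : {ffun 'I_D -> X} |
      injectiveb f & (f @: 'I_D \subset H) && (t <= #|f @: 'I_D :&: G|)]| =
  D`! * \sum_(t <= j < D.+1) 'C(#|G|, j) * 'C(#|H :\: G|, D - j).
Proof.
rewrite -card_subsets_meeting_ge.
exact: (card_inj_ffuns_image D (fun Y => (Y \subset H) && (t <= #|Y :&: G|))).
Qed.

End SubsetsMeeting.

Lemma exists_subset_card (T : finType) (A : {set T}) (n : nat) :
  (n <= #|A|)%N -> exists2 B : {set T}, B \subset A & #|B| = n.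
Proof.
rewrite -bin_gt0 -cards_draws => /card_gt0P[B]; rewrite inE => /andP[sBA /eqP card_B].
by exists B.
Qed.

Lemma card_preimset_inj (aT rT : finType) (f : aT -> rT) (B : {set rT}) :
  injective f -> #|f @^-1: B| = #|f @: aT :&: B|.
Proof.
move=> inj_f; rewrite -(card_imset _ inj_f); apply: eq_card => y.
apply/imsetP/setIP => [[x] | [/imsetP[x _ ->]]]; rewrite ?inE => fxB.
  by move=> ->; split; first exact: imset_f.
by exists x; rewrite ?inE.
Qed.

Lemma ler_ratio_nat (R : numFieldType) (a b c m : nat) : (0 < m)%N -> (m * a <= c)%N ->
  a%:R / b%:R <= c%:R / (m * b)%:R :> R.
Proof.
move=> m_gt0 le_mac; rewrite natrM invfM mulrA ler_wpM2r ?invr_ge0 ?ler0n //.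
by rewrite ler_pdivlMr ?ltr0n // -natrM ler_nat mulnC.
Qed.

Lemma eq_ablate (M : Type) (n : nat) (m1 m2 : 'I_n -> M) (T : {set 'I_n}) :
  {in T, m1 =1 m2} -> ablate m1 T = ablate m2 T.
Proof. by move=> eq_m; apply/eq_in_map => j; rewrite mem_enum; apply: eq_m. Qed.

Lemma card_Hset (n k : nat) : #|Hset n k| = 'C(n, k).
Proof. by rewrite card_draws card_ord. Qed.

Lemma valid_drawE (n k D : nat) (f : {ffun 'I_D -> {set 'I_n}}) :
  valid_draw k f = injectiveb f && (f @: 'I_D \subset Hset n k).
Proof.
congr (_ && _); apply/forallP/subsetP => [f_H _ /imsetP[d _ ->] | f_H d] //.
exact/f_H/imset_f.
Qed.

Lemma card_valid_draws (n k D : nat) :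
  #|[set f : {ffun 'I_D -> {set 'I_n}} | valid_draw k f]| = (D`! * 'C('C(n, k), D))%N.
Proof.
rewrite -(card_Hset n k) -cards_draws.
rewrite -(card_inj_ffuns_image D (fun Y => Y \subset Hset n k)).
by apply: eq_card => f; rewrite !inE valid_drawE.
Qed.

Lemma exists_avoiding_family (n k c : nat) (S : {set 'I_n}) : (#|S| <= c)%N ->
  exists G : {set {set 'I_n}}, [/\ G \subset Hset n k,
    {in G, forall T : {set 'I_n}, [disjoint T & S]} & #|G| = 'C(n - c, k)].
Proof.
move=> card_S; pose avoiding := [set T : {set 'I_n} | T \subset ~: S & #|T| == k].
have [G sG_avoid card_G] :
    exists2 G : {set {set 'I_n}}, G \subset avoiding & #|G| = 'C(n - c, k).
  apply: exists_subset_card; rewrite cards_draws cardsCs setCK card_ord.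
  by rewrite leq_bin2l ?leq_sub2l.
exists G; split => //.
  by apply: subset_trans sG_avoid _; apply/subsetP => T; rewrite !inE => /andP[].
by move=> T /(subsetP sG_avoid); rewrite inE subsets_disjoint setCK => /andP[].
Qed.

Lemma pi_tilde_inRange (R : realFieldType) (L : nat) (O M : Type)
    (pihat : O -> seq M -> 'rV[R]_L) (o : O) (n k D : nat) (mb ma : 'I_n -> M)
    (G : {set {set 'I_n}}) (f : {ffun 'I_D -> {set 'I_n}}) :
    G \subset Hset n k -> {in G, forall T, ablate ma T = ablate mb T} ->
    (D./2 < #|f @^-1: G|)%N ->
  inRange (Abenign pihat o k mb) (pi_tilde pihat o ma f).
Proof.
move=> sGH clean majority.
have benign d : f d \in G -> pihat o (ablate ma (f d)) \in Abenign pihat o k mb.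
  by move=> Gfd; rewrite clean //; apply: map_f; rewrite mem_enum (subsetP sGH).
apply/forallP => l; rewrite /pi_tilde /vmedian mxE -map_comp.
have {}majority : ((size (enum 'I_D))./2 < count (fun d => f d \in G) (enum 'I_D))%N.
  by rewrite size_enum_ord count_enum_card -cardsE.
have [[d1 Gfd1 le_d1] [d2 Gfd2 ge_d2]] :=
  median_majority (fun d => pihat o (ablate ma (f d)) 0 l) majority.
apply/andP; split; apply/hasP.
  by exists (pihat o (ablate ma (f d1))); rewrite ?benign.
by exists (pihat o (ablate ma (f d2))); rewrite ?benign.
Qed.

Theorem theorem3 (R : realFieldType) (N C k L D : nat) (O M : Type)
  (hN : (2 <= N)%N) (hk : (1 <= k)%N) (hL : (1 <= L)%N)
  (hC : (2 * C < N - 1)%N) (hkN : (k <= N - 1)%N)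
  (hbin : ('C(N - 1, k) <= 2 * 'C(N - 1 - C, k))%N)
  (pihat : O -> seq M -> 'rV[R]_L) (o : O)
  (mb ma : 'I_(N - 1) -> M)
  (hdiff : exists S : {set 'I_(N - 1)},
      (#|S| <= C)%N /\ forall i, i \notin S -> mb i = ma i)
  (hD : (0 < D)%N) (hDle : (D <= 'C(N - 1, k))%N) :
  pD R 'C(N - 1, k) 'C(N - C - 1, k) D <=
    (#|[set f : {ffun 'I_D -> {set 'I_(N - 1)}} | valid_draw k f &&
        inRange (Abenign pihat o k mb) (pi_tilde pihat o ma f)]|)%:R
    / (#|[set f : {ffun 'I_D -> {set 'I_(N - 1)}} | valid_draw k f]|)%:R.
Proof.
have [S [card_S eq_mb_ma]] := hdiff.
have [G [sGH avoid_S card_G]] := exists_avoiding_family k card_S.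
have clean : {in G, forall T, ablate ma T = ablate mb T}.
  move=> T /avoid_S dTS; apply: eq_ablate => i Ti.
  by rewrite eq_mb_ma // (disjointFr dTS Ti).
rewrite card_valid_draws /pD subnAC; apply: ler_ratio_nat (fact_gt0 D) _.
have := card_inj_ffuns_meeting sGH D D./2.+1.
rewrite cardsD (setIidPr sGH) card_Hset card_G => <-.
apply/subset_leq_card/subsetP => f; rewrite !inE valid_drawE.
case/andP => inj_f /andP[sfH majority]; rewrite inj_f sfH /=.
apply: (pi_tilde_inRange pihat o sGH clean).
by rewrite card_preimset_inj //; apply/injectiveP.
Qed.
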